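(* Let $\mathbf B\in\mathcal B_n$ and let $|G\rangle=Z_{\mathbf B}|+\rangle^{\otimes n}$ be the associated graph state. Then there exist $\mathbf v\in\mathbb F_2^n$, an upper triangular matrix $\mathbf A\in GL_n(\mathbb F_2)$ and a reduced matrix $\mathbf B_{\mathrm{red}}\in\mathcal B_n$ such that $$|G\rangle=Z_{\mathbf v}\,X_{\mathbf A}\,Z_{\mathbf B_{\mathrm{red}}}\,|+\rangle^{\otimes n}.$$
   Context: Qubits are labelled $0,\dots,n-1$; the computational basis of $(\mathbb C^2)^{\otimes n}$ is $\{|x\rangle : x\in\mathbb F_2^n\}$. $|+\rangle=\frac1{\sqrt2}(|0\rangle+|1\rangle)$. For $\mathbf v\in\mathbb F_2^n$, $Z_{\mathbf v}$ is the unitary with $Z_{\mathbf v}|x\rangle=(-1)^{\sum_i v_ix_i}|x\rangle$ (a product of Pauli $Z$ gates). For $\mathbf A\in GL_n(\mathbb F_2)$, $X_{\mathbf A}$ is the unitary with $X_{\mathbf A}|x\rangle=|\mathbf Ax\rangle$ (realizable by CNOT gates). $\mathcal B_n$ is the set of symmetric $n\times n$ matrices over $\mathbb F_2$ with zero diagonal; for $\mathbf B=(b_{ij})\in\mathcal B_n$, $Z_{\mathbf B}|x\rangle=(-1)^{\sum_{i<j}b_{ij}x_ix_j}|x\rangle$ (a product of CZ gates). A matrix $\mathbf B\in\mathcal B_n$ is called reduced if each row and each column of $\mathbf B$ contains at most one non-zero entry. *)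

From HB Require Import structures.
From mathcomp Require Import all_boot all_order all_algebra all_field.
Set Implicit Arguments. Unset Strict Implicit. Unset Printing Implicit Defensive.
Import GRing.Theory Num.Theory.
Local Open Scope ring_scope.

(* Computational basis vectors x in F_2^n are column vectors 'cV['F_2]_n.
   An n-qubit state is its vector of amplitudes, a function F_2^n -> algC. *)
Definition state (n : nat) := {ffun 'cV['F_2]_n -> algC}.

Definition sgnF2 (b : 'F_2) : algC := if b == 0 then 1 else -1.

Definition plus_state (n : nat) : state n := [ffun _ => (sqrtC 2)^-1 ^+ n].

Definition Zv (n : nat) (v : 'cV['F_2]_n) (psi : state n) : state n :=
  [ffun x : 'cV['F_2]_n => sgnF2 (\sum_(i < n) v i 0 * x i 0) * psi x].

(* X_A |x> = |A x>, extended linearly: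
   (X_A psi)(y) = sum over x with A x = y of psi(x) *)
Definition XA (n : nat) (A : 'M['F_2]_n) (psi : state n) : state n :=
  [ffun y : 'cV['F_2]_n => \sum_(x : 'cV['F_2]_n | A *m x == y) psi x].

Definition ZB (n : nat) (B : 'M['F_2]_n) (psi : state n) : state n :=
  [ffun x : 'cV['F_2]_n => sgnF2 (\sum_(i < n) \sum_(j < n | (i < j)%N) B i j * x i 0 * x j 0)
             * psi x].

Definition in_Bn (n : nat) (B : 'M['F_2]_n) : Prop :=
  B^T = B /\ forall i, B i i = 0.

Definition reduced (n : nat) (B : 'M['F_2]_n) : Prop :=
  (forall i j k, B i j != 0 -> B i k != 0 -> j = k) /\
  (forall i j k, B i j != 0 -> B k j != 0 -> i = k).

Definition upper_triangular (n : nat) (A : 'M['F_2]_n) : Prop :=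
  forall i j : 'I_n, (j < i)%N -> A i j = 0.

Definition graph_state (n : nat) (B : 'M['F_2]_n) : state n := ZB B (plus_state n).

From HB Require Import structures.
From mathcomp Require Import all_boot all_order all_algebra all_field.
Set Implicit Arguments. Unset Strict Implicit. Unset Printing Implicit Defensive.
Import GRing.Theory.
Local Open Scope ring_scope.

(* Z_B multiplies |x> by (-1)^(q_B x), where q_B x = sum_(i<j) b_ij x_i x_j.
   Over F_2 a quadratic form is determined by its polar form up to a linear
   term (x_i^2 = x_i), so substituting x = A y gives
   q_B (A y) = q_(A^T B A) y + w.y; the linear term becomes Z_v and the
   substitution becomes X_A.  It remains to make A^T B A reduced with A upper
   unitriangular, a symplectic Gram-Schmidt process: take the least index i
   of the support, its least neighbour k, use two transvections to clear
   rows i and k except for the edge {i, k}, and recurse on the other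
   indices.  Both transvections are upper triangular thanks to these two
   minimality choices. *)

Lemma F2_cases (x : 'F_2) : x = 0 \/ x = 1.
Proof. by case: x => [[|[|m]]] //= ?; [left|right]; apply: val_inj. Qed.

Lemma F2_addxx (x : 'F_2) : x + x = 0.
Proof. exact/addrr_pchar2/(@pchar_Fp 2). Qed.

Lemma F2_mulxx (x : 'F_2) : x * x = x.
Proof. by case: (F2_cases x) => ->; rewrite ?mulr0 ?mulr1. Qed.

Lemma F2_neq0 (x : 'F_2) : x != 0 -> x = 1.
Proof. by case: (F2_cases x) => ->; rewrite ?eqxx. Qed.

Lemma F2_natb_neq0 (b : bool) : (b%:R : 'F_2) != 0 -> b.
Proof. by case: b => //; rewrite eqxx. Qed.

Lemma sgnF2D (a b : 'F_2) : sgnF2 (a + b) = sgnF2 a * sgnF2 b.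
Proof.
rewrite /sgnF2; case: (F2_cases a) => ->; case: (F2_cases b) => ->;
  rewrite ?addr0 ?add0r ?F2_addxx ?eqxx ?mul1r ?mulr1 //.
by rewrite oner_eq0 mulrNN mulr1.
Qed.

Section Transvection.

Variables (R : comRingType) (n : nat).
Implicit Types (B : 'M[R]_n) (u : 'cV[R]_n).

Definition transvection (q : 'I_n) u : 'M[R]_n := 1%:M + delta_mx q 0 *m u^T.

Lemma transvectionE q u a b :
  transvection q u a b = (a == b)%:R + (a == q)%:R * u b 0.
Proof. by rewrite !mxE big_ord1 !mxE eqxx andbT. Qed.

Lemma transvection_congr q u B : B^T = B -> B q q = 0 ->
  (transvection q u)^T *m B *m transvection q u =
  B + col q B *m u^T + u *m (col q B)^T.
Proof.
move=> symB Bqq0.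
have rowq : delta_mx 0 q *m B = (col q B)^T by rewrite tr_col symB rowE.
have Bqq : delta_mx 0 q *m B *m delta_mx q 0 = 0 :> 'M_1.
  by rewrite -rowE -colE; apply/matrixP => ? ?; rewrite !ord1 !mxE Bqq0.
have -> : (transvection q u)^T = 1%:M + u *m delta_mx 0 q.
  by rewrite [LHS]linearD /= trmx1 trmx_mul trmx_delta trmxK.
rewrite /transvection mulmxDl mul1mx !mulmxDr mulmx1 !mulmxA mulmxDl -colE.
by rewrite -!(mulmxA u) Bqq mulmx0 addr0 rowq addrAC.
Qed.

End Transvection.

Section QuadraticForms.

Variable n : nat.
Implicit Types (A B C : 'M['F_2]_n) (x y w : 'cV['F_2]_n).

Definition qform C x : 'F_2 := (x^T *m C *m x) 0 0.

Definition upper_qform B x : 'F_2 :=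
  \sum_(i < n) \sum_(j < n | (i < j)%N) B i j * x i 0 * x j 0.

Lemma qformE C x : qform C x = \sum_a \sum_b C a b * x a 0 * x b 0.
Proof.
rewrite /qform mxE [RHS]exchange_big; apply: eq_bigr => b _.
by rewrite mxE mulr_suml; apply: eq_bigr => a _; rewrite !mxE (mulrC (x a 0)).
Qed.

Lemma qform_mul C A y : qform C (A *m y) = qform (A^T *m C *m A) y.
Proof. by rewrite /qform trmx_mul !mulmxA. Qed.

Lemma qform_polar C x :
  qform C x = upper_qform (C + C^T) x + \sum_a C a a * x a 0.
Proof.
pose f a b := C a b * x a 0 * x b 0.
have trichotomy a b : f a b = (if (a < b)%N then f a b else 0)
    + (if (b < a)%N then f a b else 0) + (if a == b then f a b else 0).
  by rewrite -val_eqE; case: ltngtP; rewrite ?addr0 ?add0r.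
rewrite qformE (eq_bigr (fun a => \sum_b f a b)) //.
under eq_bigr => a _ do rewrite (eq_bigr _ (fun b _ => trichotomy a b)) !big_split.
rewrite !big_split /= [in X in _ + X + _]exchange_big /upper_qform.
congr (_ + _).
  rewrite -big_split; apply: eq_bigr => a _ /=; rewrite -big_split [RHS]big_mkcond /=.
  apply: eq_bigr => b _; case: ifP; rewrite ?addr0 // => _.
  by rewrite !mxE !mulrDl /f (mulrAC (C b a)).
apply: eq_bigr => a _; rewrite (bigD1 a) //= eqxx big1 ?addr0 => [|b /negbTE].
  by rewrite /f -mulrA F2_mulxx.
by rewrite eq_sym => ->.
Qed.

Lemma in_Bn_sym B : in_Bn B -> forall a b, B a b = B b a.
Proof. by case=> symB _ a b; rewrite -[in LHS]symB mxE. Qed.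

Lemma qform_alternating B x : in_Bn B -> qform B x = 0.
Proof.
move=> hB; rewrite qform_polar big1 => [|a _]; last by rewrite hB.2 mul0r.
rewrite addr0 /upper_qform big1 // => a _; rewrite big1 // => b _.
by rewrite !mxE (in_Bn_sym hB b a) F2_addxx !mul0r.
Qed.

Lemma in_Bn_congr A B : in_Bn B -> in_Bn (A^T *m B *m A).
Proof.
move=> hB; split; first by rewrite !trmx_mul trmxK hB.1 mulmxA.
move=> a; rewrite -(qform_alternating (col a A) hB) /qform tr_col -row_mul !mxE.
by apply: eq_bigr => b _; rewrite !mxE.
Qed.

Lemma upper_qform_congr A B : in_Bn B -> exists w, forall y,
  upper_qform B (A *m y) = upper_qform (A^T *m B *m A) y + (w^T *m y) 0 0.
Proof.
move=> hB; pose U := \matrix_(a, b) if (a < b)%N then B a b else 0.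
have UB : U + U^T = B.
  apply/matrixP => a b; rewrite !mxE -(in_Bn_sym hB a b).
  by case: ltngtP => [||/val_inj->]; rewrite ?addr0 ?add0r // hB.2.
have qU x : upper_qform B x = qform U x.
  rewrite qformE; apply: eq_bigr => a _; rewrite big_mkcond.
  by apply: eq_bigr => b _; rewrite mxE; case: ifP; rewrite ?mul0r.
exists (\col_a (A^T *m U *m A) a a) => y.
rewrite qU qform_mul qform_polar !trmx_mul trmxK mulmxA -mulmxDl -mulmxDr UB.
by congr (_ + _); rewrite mxE; apply: eq_bigr => a _; rewrite !mxE.
Qed.

End QuadraticForms.

Section Reduction.

Variable n : nat.
Implicit Types (S T : {set 'I_n}) (A B P : 'M['F_2]_n) (u : 'cV['F_2]_n).
Implicit Types (i j k p q : 'I_n).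

Definition upper_unitriangular A := upper_triangular A /\ forall i, A i i = 1.

Definition id_outside S A := forall a b, a \notin S -> A a b = (a == b)%:R.

(* Only rows are constrained; for a symmetric [B] this confines its whole
   support to [S * S]. *)
Definition supported S B := forall a b, a \notin S -> B a b = 0.

Lemma upper_unitriangular1 : upper_unitriangular 1%:M.
Proof. by split=> [i j /ltn_eqF ji|i]; rewrite mxE ?eqxx // -val_eqE eq_sym ji. Qed.

Lemma upper_unitriangular_mul A P :
  upper_unitriangular A -> upper_unitriangular P -> upper_unitriangular (A *m P).
Proof.
move=> [A0 A1] [P0 P1]; split=> [i j ji|i].
  rewrite mxE big1 // => c _; case: (ltnP c i) => [ci|ic]; first by rewrite A0 // mul0r.
  by rewrite P0 ?mulr0 // (leq_trans ji ic).
rewrite mxE (bigD1 i) //= A1 P1 mulr1 big1 ?addr0 // => c ci.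
case: (ltnP c i) => [lt|le]; first by rewrite A0 // mul0r.
by rewrite P0 ?mulr0 // ltn_neqAle le andbT val_eqE eq_sym.
Qed.

Lemma upper_unitriangular_unit A : upper_unitriangular A -> A \in unitmx.
Proof.
move=> [A0 A1]; rewrite unitmxE -det_tr det_trig.
  by rewrite big1 ?unitr1 // => i _; rewrite mxE A1.
by apply/is_trig_mxP => i j ij; rewrite mxE A0.
Qed.

Lemma id_outside1 S : id_outside S 1%:M.
Proof. by move=> a b _; rewrite mxE. Qed.

Lemma id_outside_mul S A P : id_outside S A -> id_outside S P -> id_outside S (A *m P).
Proof.
move=> hA hP a b aS; rewrite mxE (bigD1 a) //= big1 ?addr0 => [|c /negbTE ca].
  by rewrite hA // eqxx mul1r hP.
by rewrite hA // eq_sym ca mul0r.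
Qed.

Lemma id_outside_subset S T A : S \subset T -> id_outside S A -> id_outside T A.
Proof. by move=> /subsetP ST hA a b aT; apply: hA; apply: contra aT; apply: ST. Qed.

Lemma id_outside_row S A a : id_outside S A -> a \notin S -> row a A = delta_mx 0 a.
Proof. by move=> hA aS; apply/matrixP => i b; rewrite !mxE hA // (ord1 i) eqxx eq_sym. Qed.

Lemma supported_subset S T B : S \subset T -> supported S B -> supported T B.
Proof. by move=> /subsetP ST hB a b aT; apply: hB; apply: contra aT; apply: ST. Qed.

Lemma supported_mem S B a b : in_Bn B -> supported S B -> B a b != 0 -> b \in S.
Proof. by move=> hB sB; rewrite (in_Bn_sym hB); apply: contraNT => /sB ->. Qed.

Lemma in_Bn_neq B a b : in_Bn B -> B a b != 0 -> a != b.
Proof. by move=> hB; apply: contraNneq => ->; rewrite hB.2. Qed.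

Lemma in_BnB B B' : in_Bn B -> in_Bn B' -> in_Bn (B - B').
Proof.
move=> [symB B0] [symB' B'0]; split=> [|a]; first by rewrite linearB /= symB symB'.
by rewrite !mxE B0 B'0 subrr.
Qed.

Lemma congr_mulmx A P B : (A *m P)^T *m B *m (A *m P) = P^T *m (A^T *m B *m A) *m P.
Proof. by rewrite trmx_mul !mulmxA. Qed.

Lemma transvection_upper_unitriangular q u :
  (forall b : 'I_n, (b <= q)%N -> u b 0 = 0) -> upper_unitriangular (transvection q u).
Proof.
move=> hu; split=> [a b ba|a]; rewrite transvectionE.
  have -> : (a == b) = false by rewrite -val_eqE gtn_eqF.
  case: eqP => [aq|_]; last by rewrite mul0r addr0.
  by rewrite hu ?mulr0 ?addr0 // -aq ltnW.
rewrite eqxx; case: eqP => [->|_]; last by rewrite mul0r addr0.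
by rewrite hu ?mulr0 ?addr0.
Qed.

Lemma transvection_id_outside S q u : q \in S -> id_outside S (transvection q u).
Proof.
move=> qS a b aS; have /negbTE aq : a != q by apply: contraNneq aS => ->.
by rewrite transvectionE aq mul0r addr0.
Qed.

Definition pivot_mx p q B := transvection q (col p B + delta_mx q 0).

Definition pivot p q B := (pivot_mx p q B)^T *m B *m pivot_mx p q B.

Lemma pivotE p q B a b : in_Bn B ->
  pivot p q B a b =
  B a b + B a q * (B b p + (b == q)%:R) + (B a p + (a == q)%:R) * B b q.
Proof.
case=> symB B0; rewrite /pivot /pivot_mx transvection_congr //.
by rewrite !mxE !big_ord1 !mxE !andbT.
Qed.

Section PivotColumns.

Variables (p q : 'I_n) (B : 'M['F_2]_n).
Hypotheses (hB : in_Bn B) (Bpq : B p q = 1).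

Lemma pivot_col_cleared a : pivot p q B a p = (a == q)%:R.
Proof.
have /negbTE pq : p != q by apply: (in_Bn_neq hB); rewrite Bpq oner_eq0.
by rewrite pivotE // hB.2 pq Bpq add0r mulr0 addr0 mulr1 addrA F2_addxx add0r.
Qed.

Lemma pivot_col_fixed a : pivot p q B a q = B a q.
Proof. by rewrite pivotE // eqxx (in_Bn_sym hB q p) Bpq F2_addxx hB.2 !mulr0 !addr0. Qed.

End PivotColumns.

Lemma supported_pivot S p q B :
  in_Bn B -> supported S B -> q \in S -> supported S (pivot p q B).
Proof.
move=> hB sB qS a b aS; have aq : (a == q) = false by apply: contraNF aS => /eqP ->.
by rewrite pivotE // !(sB a _ aS) aq mul0r !add0r mul0r.
Qed.

Lemma pivot_mx_upper_unitriangular p q B :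
  (forall b : 'I_n, (b <= q)%N -> B b p = (b == q)%:R) ->
  upper_unitriangular (pivot_mx p q B).
Proof.
move=> hB; apply: transvection_upper_unitriangular => b bq.
by rewrite !mxE hB // andbT F2_addxx.
Qed.

Definition edge_mx i k : 'M['F_2]_n := delta_mx i k + delta_mx k i.

Lemma in_Bn_edge i k : i != k -> in_Bn (edge_mx i k).
Proof.
move=> ik; split=> [|a]; first by rewrite linearD /= !trmx_delta addrC.
rewrite !mxE; case: (eqVneq a i) => [->|_]; last by rewrite andbF addr0.
by rewrite (negbTE ik) addr0.
Qed.

Lemma edge_congr S A i k :
  id_outside S A -> i \notin S -> k \notin S -> A^T *m edge_mx i k *m A = edge_mx i k.
Proof.
move=> hA iS kS.
have fixed a b : a \notin S -> b \notin S -> A^T *m delta_mx a b *m A = delta_mx a b.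
  move=> aS bS; rewrite -(mul_delta_mx (0 : 'I_1)) !mulmxA -mulmxA -rowE.
  rewrite -[A^T *m _]trmxK trmx_mul trmx_delta trmxK -rowE.
  by rewrite !(id_outside_row hA) // trmx_delta mul_delta_mx.
by rewrite /edge_mx mulmxDr mulmxDl !fixed.
Qed.

Lemma reduced_sym B :
  B^T = B -> (forall i j k, B i j != 0 -> B i k != 0 -> j = k) -> reduced B.
Proof.
move=> symB rowB; split=> // i j k Bij Bkj.
by apply: (rowB j); rewrite -[B]symB !mxE.
Qed.

Lemma reduced_edgeD S i k B : i != k -> in_Bn B -> reduced B -> supported S B ->
  i \notin S -> k \notin S -> reduced (edge_mx i k + B).
Proof.
move=> ik hB [redB _] sB iS kS; apply: reduced_sym => [|a b c].
  by rewrite linearD /= (in_Bn_edge ik).1 hB.1.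
rewrite !mxE; case: (boolP (a \in S)) => aS.
  have /negbTE ai : a != i by apply: contraNneq iS => <-.
  have /negbTE ak : a != k by apply: contraNneq kS => <-.
  by rewrite ai ak !add0r; apply: redB.
rewrite !sB // !addr0; case: (eqVneq a i) => [->|_] /=.
  by rewrite (negbTE ik) !addr0 => /F2_natb_neq0/eqP-> /F2_natb_neq0/eqP->.
by rewrite !add0r => /F2_natb_neq0/andP[_ /eqP->] /F2_natb_neq0/andP[_ /eqP->].
Qed.

Lemma split_edge_congr S B i k : in_Bn B -> supported S B ->
  i \in S -> (forall j, j \in S -> (i <= j)%N) ->
  B i k = 1 -> (forall j, (j < k)%N -> B i j = 0) ->
  exists2 P, upper_unitriangular P /\ id_outside S P &
    supported (S :\: [set i; k]) (P^T *m B *m P - edge_mx i k).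
Proof.
move=> hB sB iS imin Bik kmin.
have Bki : B k i = 1 by rewrite (in_Bn_sym hB).
have Bik0 : B i k != 0 by rewrite Bik oner_eq0.
have kS := supported_mem hB sB Bik0.
have ik := in_Bn_neq hB Bik0.
have hB1 : in_Bn (pivot i k B) := in_Bn_congr _ hB.
have B1ki : pivot i k B k i = 1 by rewrite pivot_col_cleared // eqxx.
exists (pivot_mx i k B *m pivot_mx k i (pivot i k B)).
  split; last by apply: id_outside_mul; apply: transvection_id_outside.
  apply: upper_unitriangular_mul; apply: pivot_mx_upper_unitriangular => b.
    rewrite leq_eqVlt => /orP[/eqP/val_inj-> | bk]; first by rewrite Bki eqxx.
    by rewrite (in_Bn_sym hB) kmin // -val_eqE (ltn_eqF bk).
  rewrite leq_eqVlt => /orP[/eqP/val_inj-> | bi].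
    by rewrite (in_Bn_sym hB1) B1ki eqxx.
  have bS : b \notin S by apply: contraL bi => /imin; rewrite leqNgt.
  by rewrite (supported_pivot _ hB sB kS) // -val_eqE (ltn_eqF bi).
rewrite congr_mulmx -/(pivot i k B) -/(pivot k i _).
have hB2 : in_Bn (pivot k i (pivot i k B)) := in_Bn_congr _ hB1.
have B2k a : pivot k i (pivot i k B) a k = (a == i)%:R := pivot_col_cleared hB1 B1ki a.
have B2i a : pivot k i (pivot i k B) a i = (a == k)%:R.
  by rewrite (pivot_col_fixed hB1 B1ki) (pivot_col_cleared hB Bik).
have sB2 : supported S (pivot k i (pivot i k B)).
  exact: supported_pivot hB1 (supported_pivot _ hB sB kS) iS.
move: (pivot k i _) hB2 B2k B2i sB2 => B2 hB2 B2k B2i sB2 a b.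
rewrite !inE negb_and negbK -orbA => /or3P[/eqP-> | /eqP-> | aS].
- by rewrite !mxE (in_Bn_sym hB2) B2i eqxx /= (negbTE ik) addr0 subrr.
- by rewrite !mxE (in_Bn_sym hB2) B2k eqxx /= (eq_sym k i) (negbTE ik) add0r subrr.
have /negbTE ai : a != i by apply: contraNneq aS => ->.
have /negbTE ak : a != k by apply: contraNneq aS => ->.
by rewrite !mxE ai ak sB2 // addr0 subr0.
Qed.

Definition reducing S B A := [/\ upper_unitriangular A, id_outside S A,
  reduced (A^T *m B *m A) & supported S (A^T *m B *m A)].

Lemma reducing0 S : reducing S 0 1%:M.
Proof.
rewrite /reducing mulmx0 mul0mx; split.
- exact: upper_unitriangular1.
- exact: id_outside1.
- by split=> ? ? ?; rewrite mxE eqxx.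
- by move=> ? ? _; rewrite mxE.
Qed.

Lemma reducing_subset S T B A : S \subset T -> reducing S B A -> reducing T B A.
Proof.
move=> ST [uA idA redA sA]; split=> //.
- exact: id_outside_subset idA.
- exact: supported_subset sA.
Qed.

Lemma reducing_edge S B P A i k : in_Bn B -> i \in S -> k \in S -> i != k ->
  upper_unitriangular P -> id_outside S P ->
  reducing (S :\: [set i; k]) (P^T *m B *m P - edge_mx i k) A ->
  reducing S B (P *m A).
Proof.
move=> hB iS kS ik uP idP [uA idA redA sA].
have iS' : i \notin S :\: [set i; k] by rewrite !inE eqxx.
have kS' : k \notin S :\: [set i; k] by rewrite !inE eqxx orbT.
have hR := in_BnB (in_Bn_congr P hB) (in_Bn_edge ik).
rewrite /reducing congr_mulmx -[P^T *m B *m P](subrK (edge_mx i k)) addrC.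
rewrite mulmxDr mulmxDl (edge_congr idA iS' kS'); split.
- exact: upper_unitriangular_mul.
- by apply: id_outside_mul => //; apply: id_outside_subset idA; apply: subsetDl.
- exact: reduced_edgeD ik (in_Bn_congr A hR) redA sA iS' kS'.
move=> a b aS; have /negbTE ai : a != i by apply: contraNneq aS => ->.
have /negbTE ak : a != k by apply: contraNneq aS => ->.
rewrite mxE sA ?addr0; last by rewrite !inE negb_and aS orbT.
by rewrite !mxE ai ak addr0.
Qed.

Lemma reducing_exists S B : in_Bn B -> supported S B -> exists A, reducing S B A.
Proof.
have [m] := ubnP #|S|; elim: m S B => // m IH S B /ltnSE cardS hB sB.
case: (set_0Vmem S) => [S0 | [i0 i0S]].
  suff -> : B = 0 by exists 1%:M; apply: reducing0.
  by apply/matrixP => a b; rewrite mxE sB // S0 inE.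
case: (arg_minnP val i0S) => i iS imin.
case: (boolP [exists j, B i j != 0]) => [/existsP[j0 Bij0] | /existsPn rowi0].
  case: (arg_minnP val (P := fun j => B i j != 0) Bij0) => k Bik0 kmin.
  have kmin' j : (j < k)%N -> B i j = 0.
    by move=> jk; apply/eqP; apply: contraTT jk => /kmin; rewrite -leqNgt.
  have ik := in_Bn_neq hB Bik0.
  have [P [uP idP] sR] := split_edge_congr hB sB iS imin (F2_neq0 Bik0) kmin'.
  have hR := in_BnB (in_Bn_congr P hB) (in_Bn_edge ik).
  have [|A redA] := IH _ _ _ hR sR.
    apply: leq_trans cardS; apply: proper_card; apply/properP.
    by split; [exact: subsetDl | exists i => //; rewrite !inE eqxx].
  exists (P *m A); apply: reducing_edge redA => //.
  exact: supported_mem hB sB Bik0.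
have sB' : supported (S :\ i) B.
  move=> a b; rewrite !inE negb_and negbK => /orP[/eqP-> | aS]; last exact: sB.
  exact/eqP/negPn/rowi0.
have [|A redA] := IH _ B _ hB sB'; first exact: leq_trans (proper_card (properD1 iS)) cardS.
by exists A; apply: reducing_subset redA; apply: subsetDl.
Qed.

End Reduction.

Lemma reduced_congr n (B : 'M['F_2]_n) :
  in_Bn B -> exists2 A, upper_unitriangular A & reduced (A^T *m B *m A).
Proof.
move=> hB; have [|A [uA _ redA _]] := @reducing_exists _ [set: 'I_n] B hB.
  by move=> a b; rewrite inE.
by exists A.
Qed.

Theorem theorem5p2 (n : nat) (B : 'M['F_2]_n) :
  in_Bn B ->
  exists (v : 'cV['F_2]_n) (A : 'M['F_2]_n) (Bred : 'M['F_2]_n),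
    [/\ A \in unitmx, upper_triangular A, in_Bn Bred, reduced Bred &
        graph_state B = Zv v (XA A (ZB Bred (plus_state n)))].
Proof.
move=> hB; have [A uA redA] := reduced_congr hB.
have [w hw] := upper_qform_congr A hB.
have unitA := upper_unitriangular_unit uA.
exists ((invmx A)^T *m w), A, (A^T *m B *m A).
split=> //; [exact: uA.1 | exact: in_Bn_congr |].
apply/ffunP => x; rewrite !ffunE (big_pred1 (invmx A *m x)) => [|y]; last first.
  by apply/eqP/eqP => [<-|->]; rewrite ?mulKmx ?mulKVmx.
rewrite !ffunE -/(upper_qform B x) -/(upper_qform _ (invmx A *m x)).
rewrite -{1}(mulKVmx unitA x) hw addrC sgnF2D mulrA; congr (sgnF2 _ * _ * _).
rewrite mulmxA mxE; apply: eq_bigr => i _; congr (_ * _).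
by rewrite !mxE; apply: eq_bigr => j _; rewrite !mxE mulrC.
Qed.
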